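(* Let $\mathcal{H}$ be a real separable Hilbert space, $t_0>0$, and let $(\Omega,\mathcal{F},\{\mathcal{F}_t\}_{t\geq t_0},\mathbb{P})$ be a filtered probability space carrying an $\mathcal{H}$-valued Brownian motion $W_X$. Assume $f:\mathcal{H}\to\mathbb{R}$ is convex, of class $\mathcal{C}^1$, with $L$-Lipschitz continuous gradient and $\operatorname{argmin}_{\mathcal{H}} f\neq\emptyset$, with minimum norm minimizer $x^*$; $\varepsilon:[t_0,+\infty)\to\mathbb{R}^+$ is nonincreasing, of class $\mathcal{C}^1$, with $\lim_{t\to+\infty}\varepsilon(t)=0$; $\delta>0$, $\lambda>0$; and $\sigma_X:[t_0,+\infty)\to\mathcal{L}(\mathcal{H},\mathcal{H})$ is measurable and square-integrable. Let $(X,Y)$ be a solution trajectory of \[ \begin{cases} dX(t)=Y(t)\,dt,\\ dY(t)=\big(-\delta\sqrt{\varepsilon(t)}\,Y(t)-\nabla f(X(t))-\varepsilon(t)X(t)\big)dt+\sigma_X(t)\,dW_X(t),\\ X(t_0)=X_0,\quad Y(t_0)=Y_0. \end{cases} \] Then for all $t\geq t_0$: \[ f(X(t))-\inf_{\mathcal{H}}f\leq \mathcal{E}(t,X(t),Y(t))+\frac{\varepsilon(t)}{2}\|x^*\|^2,\qquad \|X(t)-x_{\varepsilon(t)}\|^2\leq \frac{2\,\mathcal{E}(t,X(t),Y(t))}{\varepsilon(t)}. \] Therefore, $X(t)$ converges strongly to $x^*$ almost surely if $\lim_{t\to+\infty}\frac{\mathcal{E}(t,X(t),Y(t))}{\varepsilon(t)}=0$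 (almost surely).
   Context: $\varphi_t(x):=f(x)+\frac{\varepsilon(t)}{2}\|x\|^2$; $x_{\varepsilon(t)}:=\operatorname{argmin}_{\mathcal{H}}\varphi_t$ (the unique minimizer); $V(t,x,y):=\lambda\sqrt{\varepsilon(t)}(x-x_{\varepsilon(t)})+y$; and the energy function is $\mathcal{E}(t,x,y):=\varphi_t(x)-\varphi_t(x_{\varepsilon(t)})+\frac12\|V(t,x,y)\|^2$. *)

From HB Require Import structures.
From mathcomp Require Import all_boot all_order all_algebra.
From mathcomp Require Import all_classical all_reals all_analysis.
Set Implicit Arguments. Unset Strict Implicit. Unset Printing Implicit Defensive.
Import Order.TTheory GRing.Theory Num.Theory.
Import numFieldNormedType.Exports.
Local Open Scope classical_set_scope.
Local Open Scope ring_scope.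

(* [ip] is an inner product on H inducing the norm of H. Together with
   completeness of H (completeNormedModType) this makes H a real Hilbert space. *)
Definition is_inner_product (R : realType) (H : normedModType R)
  (ip : H -> H -> R) : Prop :=
  (forall x y, ip x y = ip y x) /\
  (forall (a : R) (x y z : H), ip (a *: x + y) z = a * ip x z + ip y z) /\
  (forall x, ip x x = `|x| ^+ 2).

Definition separable_space (R : realType) (H : normedModType R) : Prop :=
  exists D : set H, countable D /\ closure D = setT.

Definition convex_fun (R : realType) (H : normedModType R) (f : H -> R) : Prop :=
  forall (x y : H) (a : R), 0 <= a <= 1 ->
    f (a *: x + (1 - a) *: y) <= a * f x + (1 - a) * f y.

Definition argmin (R : realType) (H : normedModType R) (g : H -> R) : set H :=
  [set x | forall y, g x <= g y].

Definition min_norm_minimizer (R : realType) (H : normedModType R)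
  (f : H -> R) : H :=
  xget 0 [set x | argmin f x /\ forall y, argmin f y -> `|x| <= `|y|].

Definition phi (R : realType) (H : normedModType R) (f : H -> R)
  (eps : R -> R) (t : R) (x : H) : R :=
  f x + eps t / 2 * `|x| ^+ 2.

Definition xeps (R : realType) (H : normedModType R) (f : H -> R)
  (eps : R -> R) (t : R) : H :=
  xget 0 (argmin (phi f eps t)).

Definition Vfun (R : realType) (H : normedModType R) (f : H -> R)
  (eps : R -> R) (lambda : R) (t : R) (x y : H) : H :=
  (lambda * Num.sqrt (eps t)) *: (x - xeps f eps t) + y.

Definition Energy (R : realType) (H : normedModType R) (f : H -> R)
  (eps : R -> R) (lambda : R) (t : R) (x y : H) : R :=
  phi f eps t x - phi f eps t (xeps f eps t)
  + 1 / 2 * `|Vfun f eps lambda t x y| ^+ 2.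

(* For t >= t0, phi_t is eps(t)-strongly convex, so it has a minimizer x_eps(t)
   (minimizing sequences are Cauchy in the complete space H) and grows
   quadratically around it: eps(t)/2 |x - x_eps(t)|^2 <= phi_t x - phi_t x_eps(t),
   which is at most E(t, x, y).  Together with phi_t x_eps(t) <= phi_t x^* this
   gives both estimates; they hold for every (x, y), so nothing about the
   trajectory beyond the hypothesis on E/eps is needed.
   Tikhonov: comparing the quadratic growth of phi_s and phi_t at each other's
   minimizers shows that |x_eps(t)|^2 is nondecreasing, bounded by |x^*|^2, and
   that its increments dominate |x_eps(t) - x_eps(s)|^2; hence x_eps(t)
   converges, and its limit is a minimizer of f of norm at most |x^*|, i.e. x^*.
   Finally X(t) - x_eps(t) -> 0 since |X(t) - x_eps(t)|^2 <= 2 E / eps. *)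

From Pilot Require Import Defs.
From HB Require Import structures.
From mathcomp Require Import all_boot all_order all_algebra.
From mathcomp Require Import all_classical all_reals all_analysis.
From mathcomp Require Import ring lra.
Set Implicit Arguments. Unset Strict Implicit. Unset Printing Implicit Defensive.
Import Order.TTheory GRing.Theory Num.Theory.
Import numFieldNormedType.Exports.
Local Open Scope classical_set_scope.
Local Open Scope ring_scope.

Section InnerProduct.
Variables (R : realType) (H : normedModType R) (ip : H -> H -> R).
Hypothesis ipP : is_inner_product ip.

Lemma ipC (u v : H) : ip u v = ip v u.
Proof. by case: ipP. Qed.

Lemma ipDl (u v z : H) : ip (u + v) z = ip u z + ip v z.
Proof. by case: ipP => _ [lin _]; have := lin 1 u v z; rewrite scale1r mul1r. Qed.

Lemma ipZl (a : R) (u z : H) : ip (a *: u) z = a * ip u z.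
Proof.
have ip0 : ip 0 z = 0 by have := ipDl 0 0 z; rewrite addr0 => h; lra.
by case: ipP => _ [lin _]; have := lin a u 0 z; rewrite !addr0 ip0 addr0.
Qed.

Lemma sqr_normD (u v : H) : `|u + v| ^+ 2 = `|u| ^+ 2 + 2 * ip u v + `|v| ^+ 2.
Proof.
case: ipP => _ [_ ipnorm].
rewrite -!ipnorm ipDl ![ip _ (u + v)]ipC !ipDl (ipC v u); ring.
Qed.

Lemma sqr_norm_convex_comb (a : R) (x y : H) : `|a *: x + (1 - a) *: y| ^+ 2
  = a * `|x| ^+ 2 + (1 - a) * `|y| ^+ 2 - a * (1 - a) * `|x - y| ^+ 2.
Proof.
have -> : a *: x + (1 - a) *: y = y + a *: (x - y).
  by rewrite scalerBl scale1r scalerBr addrCA.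
have -> : `|x| ^+ 2 = `|x - y| ^+ 2 + 2 * ip (x - y) y + `|y| ^+ 2.
  by rewrite -sqr_normD subrK.
rewrite (sqr_normD y) (ipC y) ipZl normrZ exprMn real_normK ?num_real //; ring.
Qed.

End InnerProduct.

Definition strongly_convex (R : realType) (H : normedModType R) (mu : R)
  (g : H -> R) : Prop :=
  forall x y a, 0 <= a <= 1 ->
    g (a *: x + (1 - a) *: y)
      <= a * g x + (1 - a) * g y - mu / 2 * (a * (1 - a)) * `|x - y| ^+ 2.

Section StronglyConvex.
Variables (R : realType) (H : normedModType R).

Lemma sqr_norm_continuous : continuous (fun x : H => `|x| ^+ 2).
Proof.
by move=> x; exact: continuous_comp (@norm_continuous _ H x) (@exprn_continuous R 2 _).
Qed.

Lemma strongly_convex_sqr_norm (ip : H -> H -> R) :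
  is_inner_product ip -> strongly_convex 2 (fun x : H => `|x| ^+ 2).
Proof. by move=> ipP x y a _; rewrite (sqr_norm_convex_comb ipP) divff // mul1r. Qed.

Lemma half_itv : 0 <= (2 : R)^-1 <= 1.
Proof. by apply/andP; split; [rewrite invr_ge0 | rewrite invf_le1 // ler1n]. Qed.

Lemma strongly_convex_midpoint (mu : R) (g : H -> R) (x y : H) :
  strongly_convex mu g ->
  g (2^-1 *: x + (1 - 2^-1) *: y) <= (g x + g y) / 2 - mu / 8 * `|x - y| ^+ 2.
Proof.
move=> /(_ x y _ half_itv); have -> : (1 - 2^-1 : R) = 2^-1 by field.
have -> : mu / 2 * (2^-1 * 2^-1) = mu / 8 by field.
by rewrite -mulrDr mulrC.
Qed.

Lemma strongly_convex_growth (mu : R) (g : H -> R) (m x : H) :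
  strongly_convex mu g -> argmin g m -> mu / 2 * `|x - m| ^+ 2 <= g x - g m.
Proof.
move=> gsc gm; set k := mu / 2 * `|x - m| ^+ 2; set D := g x - g m.
have kD a : 0 < a <= 1 -> k * (1 - a) <= D.
  move=> /andP[a0 a1]; rewrite -(ler_pM2l a0).
  have := gm (a *: x + (1 - a) *: m); have := gsc x m a.
  rewrite ltW //= a1 => /(_ isT); rewrite /k /D; lra.
have D0 : 0 <= D by have := kD 1; rewrite ltr01 lexx subrr mulr0; apply.
apply/ler_addgt0Pr => e e0; have [ke|ek] := leP k e; first lra.
have k0 : 0 < k by lra.
have := kD (e / k); rewrite divr_gt0 // ler_pdivrMr // mul1r ltW //.
have -> : k * (1 - e / k) = k - e by field; rewrite gt_eqF.
move=> /(_ isT); lra.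
Qed.

Lemma strongly_convex_argmin_unique (mu : R) (g : H -> R) (C : set H) (m1 m2 : H) :
  0 < mu -> strongly_convex mu g ->
  (forall x y a, 0 <= a <= 1 -> C x -> C y -> C (a *: x + (1 - a) *: y)) ->
  C m1 -> C m2 -> (forall y, C y -> g m1 <= g y) -> (forall y, C y -> g m2 <= g y) ->
  m1 = m2.
Proof.
move=> mu0 gsc Cconv Cm1 Cm2 m1min m2min.
have g_mid := strongly_convex_midpoint m1 m2 gsc.
have m1_le_mid := m1min _ (Cconv _ _ _ half_itv Cm1 Cm2).
have m12 := m1min _ Cm2; have m21 := m2min _ Cm1.
have dist0 : `|m1 - m2| ^+ 2 <= 0.
  rewrite leNgt; apply/negP => dist_gt0.
  have : 0 < mu / 8 * `|m1 - m2| ^+ 2 by rewrite mulr_gt0 ?divr_gt0.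
  lra.
by apply/eqP; rewrite -subr_eq0 -normr_eq0 -sqrf_eq0 eq_le dist0 sqr_ge0.
Qed.

End StronglyConvex.

Section Complete.
Variables (R : realType) (H : completeNormedModType R).

Lemma cvgn_sqr_dist_bound (u : nat -> H) (a : nat -> R) : a @ \oo --> 0 ->
  (forall n m, `|u n - u m| ^+ 2 <= a n + a m) -> cvgn u.
Proof.
move=> a0 ua; apply: cauchy_cvg; apply: cauchy_exP => e e0.
have e2 : 0 < e ^+ 2 / 2 by rewrite divr_gt0 // exprn_gt0.
have [N _ aN] := cvgr0_norm_lt a a0 _ e2.
exists (u N); exists N => // n /= Nn; rewrite -ball_normE /ball_ /=.
have := aN N (leqnn N); have := aN n Nn; have := ua N n.
have := ler_norm (a N); have := ler_norm (a n); have := normr_ge0 (u N - u n).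
nra.
Qed.

Lemma strongly_convex_attains_min (mu : R) (g : H -> R) (C : set H) (b : R) :
  0 < mu -> strongly_convex mu g -> continuous g -> closed C ->
  (forall x y a, 0 <= a <= 1 -> C x -> C y -> C (a *: x + (1 - a) *: y)) ->
  C !=set0 -> (forall x, C x -> b <= g x) ->
  exists2 m, C m & forall y, C y -> g m <= g y.
Proof.
move=> mu0 gsc gcont Ccl Cconv [x0 Cx0] gb.
have gC : has_inf (g @` C).
  by split; [exists (g x0), x0 | exists b => _ [x Cx <-]; exact: gb].
set s := inf (g @` C).
have s_le x : C x -> s <= g x by move=> Cx; apply: ge_inf; [exact: gC.2 | exists x].
have near_inf n : exists x, C x /\ g x < s + harmonic n.
  by have [_ [x Cx <-] gx] := inf_adherent (harmonic_gt0 n) gC; exists x.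
have [u Cu] := choice near_inf.
have gu : (g \o u) @ \oo --> s.
  apply: (@squeeze_cvgr _ _ _ _ (cst s) (fun n => s + harmonic n)).
  - apply: nearW => n /=; have [Cun gun] := Cu n.
    by apply/andP; split; [exact: s_le | exact: ltW].
  - exact: cvg_cst.
  - rewrite -[X in _ --> X]addr0; apply: cvgD; [exact: cvg_cst | exact: cvg_harmonic].
(* [g] is at least [s] at the midpoint of [u n] and [u m], so strong convexity
   bounds [|u n - u m|^2] by the excesses of [g (u n)] and [g (u m)] over [s]. *)
have ucvg : cvgn u.
  apply: (@cvgn_sqr_dist_bound _ (fun n => 4 / mu * (g (u n) - s))).
    rewrite -(mulr0 (4 / mu)); apply: cvgMl_tmp.
    by rewrite -(subrr s); apply: cvgB => //; exact: cvg_cst.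
  move=> n m; have s_mid := s_le _ (Cconv _ _ _ (half_itv R) (Cu n).1 (Cu m).1).
  have g_mid := strongly_convex_midpoint (u n) (u m) gsc.
  rewrite -(ler_pM2l (_ : 0 < mu / 8)) ?divr_gt0 //.
  have -> : mu / 8 * (4 / mu * (g (u n) - s) + 4 / mu * (g (u m) - s))
    = (g (u n) + g (u m)) / 2 - s by field; rewrite gt_eqF.
  lra.
have ul : u @ \oo --> limn u := ucvg.
have Cl : C (limn u).
  by apply: (closed_cvg C Ccl _ _ ul); apply: nearW => n; exact: (Cu n).1.
exists (limn u) => // y Cy; apply: le_trans (s_le _ Cy).
have gl : (g \o u) @ \oo --> g (limn u) by apply: continuous_cvg => //; exact: gcont.
by rewrite (cvg_unique _ gl gu).
Qed.

Lemma cvg_sqr_norm_increments (z : R -> H) (t0 B : R) :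
  (forall s t, t0 <= s -> s <= t -> `|z t - z s| ^+ 2 <= `|z t| ^+ 2 - `|z s| ^+ 2) ->
  (forall t, t0 <= t -> `|z t| <= B) -> cvg (z @ +oo).
Proof.
move=> zinc zB; set S := [set r | exists2 t, t0 <= t & r = `|z t| ^+ 2].
have supS : has_sup S.
  split; first by exists (`|z t0| ^+ 2), t0.
  exists (B ^+ 2) => _ [t t0t ->].
  by have := zB _ t0t; have := normr_ge0 (z t); nra.
apply: cauchy_cvg; apply: cauchy_exP => e e0.
have e2 : 0 < e ^+ 2 by rewrite exprn_gt0.
have [_ [s t0s ->] supS_lt] := sup_adherent e2 supS.
exists (z s); exists s; split; first exact: num_real.
move=> t st; rewrite -ball_normE /ball_ /= distrC.
have zt_le : `|z t| ^+ 2 <= sup S.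
  by apply: sup_upper_bound => //; exists t => //; apply: le_trans t0s (ltW st).
have := zinc _ _ t0s (ltW st); have := normr_ge0 (z t - z s); nra.
Qed.

End Complete.

Section SqrDistLimit.
Variables (R : realType) (H : normedModType R).

Lemma cvg_sqr_dist_le {T : Type} {F : set_system T} {FF : Filter F}
  (u v : T -> H) (a : T -> R) (l : H) :
  (\forall x \near F, `|u x - v x| ^+ 2 <= a x) -> a @ F --> 0 -> v @ F --> l ->
  u @ F --> l.
Proof.
move=> uva a0 vl; apply/cvgrPdist_lt => e e0.
have e2 : 0 < e / 2 by rewrite divr_gt0.
move: vl => /cvgrPdist_lt /(_ _ e2) vnear.
have anear : \forall x \near F, `|a x| < (e / 2) ^+ 2.
  by apply: cvgr0_norm_lt => //; exact: exprn_gt0.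
near=> x.
have vx : `|l - v x| < e / 2 by near: x.
have ax : `|a x| < (e / 2) ^+ 2 by near: x.
have uvx : `|u x - v x| ^+ 2 <= a x by near: x.
have ux : `|v x - u x| < e / 2.
  rewrite distrC; have := ler_norm (a x); have := normr_ge0 (u x - v x); nra.
have := ler_distD (v x) l (u x); lra.
Unshelve. all: by end_near.
Qed.

End SqrDistLimit.

Section Argmin.
Variables (R : realType) (H : normedModType R) (f : H -> R).

Lemma argmin_closed : continuous f -> closed (argmin f).
Proof.
move=> fcont; have -> : argmin f = \bigcap_(y in setT) (f @^-1` [set r | r <= f y]).
  apply/seteqP; split => [x xmin y _ | x xmin y]; first exact: xmin.
  exact: xmin y I.
apply: closed_bigI => y _; apply: preimage_closed; last exact: closed_le.
by move=> x _; exact: fcont.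
Qed.

Lemma argmin_convex : convex_fun f -> forall (x y : H) (a : R), 0 <= a <= 1 ->
  argmin f x -> argmin f y -> argmin f (a *: x + (1 - a) *: y).
Proof.
move=> fcvx x y a a01 xmin ymin z; apply: le_trans (fcvx x y a a01) _.
have := xmin z; have := ymin z; case/andP: a01; nra.
Qed.

Lemma inf_range_argmin (x : H) : argmin f x -> inf (range f) = f x.
Proof.
move=> xmin; apply/eqP; rewrite eq_le; apply/andP; split.
- apply: ge_inf; last by exists x.
  by exists (f x) => _ [y _ <-]; exact: xmin y.
- apply: lb_le_inf; first by exists (f x), x.
  by move=> _ [y _ <-]; exact: xmin y.
Qed.

End Argmin.

Section Tikhonov.
Variables (R : realType) (H : completeNormedModType R) (ip : H -> H -> R)
  (f : H -> R) (eps : R -> R) (t0 : R).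
Hypotheses (ipP : is_inner_product ip) (fcvx : convex_fun f) (fcont : continuous f)
  (fmin : argmin f !=set0) (eps_gt0 : forall t, t0 <= t -> 0 < eps t)
  (eps_noninc : forall s t, t0 <= s -> s <= t -> eps t <= eps s)
  (eps_cvg0 : eps @ +oo --> 0).

Local Notation phi := (phi f eps).
Local Notation xe := (xeps f eps).
Local Notation xs := (min_norm_minimizer f).

Lemma tikhonov_term_ge0 t (x : H) : t0 <= t -> 0 <= eps t / 2 * `|x| ^+ 2.
Proof. by move=> t0t; rewrite mulr_ge0 ?sqr_ge0 // divr_ge0 // ltW // eps_gt0. Qed.

Lemma phi_strongly_convex t : strongly_convex (eps t) (phi t).
Proof.
move=> x y a a01; rewrite /Defs.phi (sqr_norm_convex_comb ipP).
have := fcvx x y a01; lra.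
Qed.

Lemma xeps_argmin t : t0 <= t -> argmin (phi t) (xe t).
Proof.
move=> t0t; have [x0 x0min] := fmin.
have [m _ mmin] : exists2 m, setT m & forall y, setT y -> phi t m <= phi t y.
  apply: (@strongly_convex_attains_min _ _ (eps t) _ _ (f x0)).
  - exact: eps_gt0.
  - exact: phi_strongly_convex.
  - move=> x; rewrite /Defs.phi; apply: cvgD; first exact: fcont.
    by apply: cvgMl_tmp; exact: sqr_norm_continuous.
  - exact: closedT.
  - by [].
  - by exists 0.
  - move=> y _; have := x0min y; have := tikhonov_term_ge0 y t0t.
    rewrite /Defs.phi; lra.
by apply: (xgetPex 0 (P := argmin (phi t))); exists m => y; exact: mmin.
Qed.

Lemma xeps_quadratic_growth t (x : H) : t0 <= t ->
  eps t / 2 * `|x - xe t| ^+ 2 <= phi t x - phi t (xe t).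
Proof.
move=> t0t; apply: strongly_convex_growth; first exact: phi_strongly_convex.
exact: xeps_argmin.
Qed.

Lemma min_norm_minimizerP : argmin f xs /\ forall y, argmin f y -> `|xs| <= `|y|.
Proof.
have [m mmin mnorm] :
    exists2 m, argmin f m & forall y, argmin f y -> `|m| ^+ 2 <= `|y| ^+ 2.
  apply: (@strongly_convex_attains_min _ _ 2 _ _ 0).
  - by rewrite ltr0n.
  - exact: strongly_convex_sqr_norm ipP.
  - exact: sqr_norm_continuous.
  - exact: argmin_closed fcont.
  - exact: argmin_convex fcvx.
  - exact: fmin.
  - by move=> x _; exact: sqr_ge0.
apply: (xgetPex 0 (P := [set x | argmin f x /\ forall y, argmin f y -> `|x| <= `|y|])).
exists m; split => // y ymin.
by have := mnorm _ ymin; have := normr_ge0 m; have := normr_ge0 y; nra.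
Qed.

Lemma min_norm_minimizer_unique (z : H) : argmin f z -> `|z| <= `|xs| -> z = xs.
Proof.
move=> zmin zle; have [xsmin xsle] := min_norm_minimizerP.
apply: (@strongly_convex_argmin_unique _ _ 2 _ (argmin f)).
- by rewrite ltr0n.
- exact: strongly_convex_sqr_norm ipP.
- exact: argmin_convex fcvx.
- exact: zmin.
- exact: xsmin.
- move=> y ymin; have := le_trans zle (xsle _ ymin).
  by have := normr_ge0 z; nra.
- by move=> y ymin; have := xsle _ ymin; have := normr_ge0 xs; nra.
Qed.

Lemma norm_xeps_le t : t0 <= t -> `|xe t| <= `|xs|.
Proof.
move=> t0t; have [xsmin _] := min_norm_minimizerP.
have e0 : 0 < eps t / 2 by rewrite divr_gt0 ?eps_gt0.
have sqr_le : `|xe t| ^+ 2 <= `|xs| ^+ 2.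
  rewrite -(ler_pM2l e0); have := xeps_quadratic_growth xs t0t.
  have := xsmin (xe t); have := tikhonov_term_ge0 (xs - xe t) t0t.
  rewrite /Defs.phi; lra.
by have := normr_ge0 (xe t); have := normr_ge0 xs; nra.
Qed.

Lemma sqr_dist_xeps_le_norm_increment s t : t0 <= s -> s <= t ->
  `|xe t - xe s| ^+ 2 <= `|xe t| ^+ 2 - `|xe s| ^+ 2.
Proof.
move=> t0s st; have t0t := le_trans t0s st.
have [->|neq] := eqVneq (xe t) (xe s); first by rewrite !subrr normr0 expr0n /=.
set D := `|xe t - xe s| ^+ 2; set Q := `|xe t| ^+ 2 - `|xe s| ^+ 2.
have D0 : 0 < D by rewrite exprn_gt0 // normr_gt0 subr_eq0.
have DQ : (eps s + eps t) * D <= (eps s - eps t) * Q.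
  have := xeps_quadratic_growth (xe t) t0s; have := xeps_quadratic_growth (xe s) t0t.
  rewrite /Defs.phi (distrC (xe s)) /D /Q; lra.
rewrite leNgt; apply/negP => QD.
have : (eps s - eps t) * Q <= (eps s - eps t) * D.
  by rewrite ler_wpM2l ?subr_ge0 ?eps_noninc // ltW.
have := mulr_gt0 (eps_gt0 t0t) D0; lra.
Qed.

Lemma cvg_xeps : xe @ +oo --> xs.
Proof.
have [xsmin _] := min_norm_minimizerP.
have t0_le : \forall t \near +oo, t0 <= t by exact: nbhs_pinfty_ge (num_real t0).
have xecvg : cvg (xe @ +oo).
  exact: cvg_sqr_norm_increments sqr_dist_xeps_le_norm_increment norm_xeps_le.
set z := lim (xe @ +oo); have xez : xe @ +oo --> z := xecvg.
have fz : f z <= f xs.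
  have fxe : (f \o xe) @ +oo --> f z by apply: continuous_cvg => //; exact: fcont.
  have fxs : (fun t => f xs + eps t / 2 * `|xs| ^+ 2) @ +oo --> f xs.
    rewrite -[X in _ --> X]addr0 -(mul0r (`|xs| ^+ 2)) -(mul0r 2^-1).
    by apply: cvgD; [exact: cvg_cst | apply: cvgMr_tmp; apply: cvgMr_tmp].
  apply: (@ler_cvg_to _ _ _ _ _ _ _ _ fxe fxs).
  near=> t; have t0t : t0 <= t by near: t.
  have := xeps_argmin t0t xs; have := tikhonov_term_ge0 (xe t) t0t.
  rewrite /Defs.phi /=; lra.
have zmin : argmin f z by move=> y; apply: le_trans fz (xsmin y).
have zle : `|z| <= `|xs|.
  have nxe : (Num.norm \o xe) @ +oo --> `|z|.
    by apply: continuous_cvg => //; exact: norm_continuous.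
  apply: (closed_cvg [set r : R | r <= `|xs|] (@closed_le _ `|xs|) _ _ nxe).
  near=> t; rewrite /=; apply: norm_xeps_le; by near: t.
by rewrite -(min_norm_minimizer_unique zmin zle).
Unshelve. all: by end_near.
Qed.

Lemma phi_gap_le_Energy lam t (x y : H) : phi t x - phi t (xe t) <= Energy f eps lam t x y.
Proof. by rewrite /Energy; have := sqr_ge0 `|Vfun f eps lam t x y|; lra. Qed.

Lemma sub_inf_le_Energy lam t (x y : H) : t0 <= t ->
  f x - inf (range f) <= Energy f eps lam t x y + eps t / 2 * `|xs| ^+ 2.
Proof.
move=> t0t; have [xsmin _] := min_norm_minimizerP.
rewrite (inf_range_argmin xsmin).
have := phi_gap_le_Energy lam t x y; have := xeps_argmin t0t xs.
have := tikhonov_term_ge0 x t0t; rewrite /Defs.phi; lra.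
Qed.

Lemma sqr_dist_xeps_le_Energy lam t (x y : H) : t0 <= t ->
  `|x - xe t| ^+ 2 <= 2 * Energy f eps lam t x y / eps t.
Proof.
move=> t0t; rewrite ler_pdivlMr ?eps_gt0 //.
have := xeps_quadratic_growth x t0t; have := phi_gap_le_Energy lam t x y; lra.
Qed.

End Tikhonov.

Unset Implicit Arguments.
Set Strict Implicit.

Theorem mainTheorem3 (R : realType) (H : completeNormedModType R)
  (ip : H -> H -> R) (f : H -> R) (grad : H -> H) (L : R)
  (eps : R -> R) (t0 delta lambda : R)
  (d : measure_display) (Omega : measurableType d) (P : probability Omega R)
  (X Y : Omega -> R -> H) :
  is_inner_product ip ->
  separable_space H ->
  0 < t0 ->
  convex_fun f ->
  (forall x, differentiable f x /\
     forall u, ('d f x : H -> R) u = ip (grad x) u) ->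
  0 < L ->
  (forall x y, `|grad x - grad y| <= L * `|x - y|) ->
  argmin f !=set0 ->
  (forall t, t0 <= t -> 0 < eps t) ->
  (forall s t, t0 <= s -> s <= t -> eps t <= eps s) ->
  (forall t, t0 <= t -> derivable eps t 1) ->
  {within `[t0, +oo[, continuous (derive1 eps)} ->
  eps @ +oo --> 0 ->
  0 < delta -> 0 < lambda ->
  (forall w t, t0 <= t ->
     f (X w t) - inf (range f)
       <= Energy f eps lambda t (X w t) (Y w t)
          + eps t / 2 * `|min_norm_minimizer f| ^+ 2
   /\ `|X w t - xeps f eps t| ^+ 2
       <= 2 * Energy f eps lambda t (X w t) (Y w t) / eps t)
  /\
  ({ae P, forall w,
      (fun t => Energy f eps lambda t (X w t) (Y w t) / eps t) @ +oo --> 0} ->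
   {ae P, forall w, X w @ +oo --> min_norm_minimizer f}).
Proof.
move=> ipP _ _ fcvx fdiff _ _ fmin eps_gt0 eps_noninc _ _ eps_cvg0 _ _.
have fcont : continuous f by move=> x; exact: differentiable_continuous (fdiff x).1.
have dist_bound := sqr_dist_xeps_le_Energy ipP fcvx fcont fmin eps_gt0 lambda.
split=> [w t t0t | Ecvg].
  split; last exact: dist_bound.
  exact (sub_inf_le_Energy ipP fcvx fcont fmin eps_gt0 lambda (X w t) (Y w t) t0t).
apply: filterS Ecvg => w Ecvg.
apply: (@cvg_sqr_dist_le _ _ _ _ _ (X w) (xeps f eps)
  (fun t => 2 * (Energy f eps lambda t (X w t) (Y w t) / eps t))).
- near=> t; rewrite mulrA; apply: dist_bound.
  by near: t; exact: nbhs_pinfty_ge (num_real t0).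
- by rewrite -(mulr0 2); apply: cvgMl_tmp.
- exact: cvg_xeps ipP fcvx fcont fmin eps_gt0 eps_noninc eps_cvg0.
Unshelve. all: by end_near.
Qed.
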